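(* Let $V_\theta$ be a real vector space of dimension $2$ and let $M\subset V_\theta\times[0,1]$ be a dichotomous item response hypersurface with associated function $f:V_\theta\to[0,1]$. Then for every $w\in V_\theta$ there exists a nonzero $v\in V_\theta$ such that $f$ is constant on the line $w+\mathbb{R}\cdot v=\{w+\lambda v:\lambda\in\mathbb{R}\}$.
   Context: A dichotomous item response hypersurface (IRHS) is a $D=\dim V_\theta$ dimensional smooth submanifold $M$ of $V_\theta\times[0,1]$ such that for any two vectors $v,w\in V_\theta$, the intersection of $(w+\mathbb{R}\cdot v)\times[0,1]$ with $M$ is the graph of a monotonic function $w+\mathbb{R}\cdot v\to[0,1]$. A function $g:w+\mathbb{R}\cdot v\to[0,1]$ is monotonic if either $g(w+\lambda v)\le g(w+\mu v)$ for all $\lambda\le\mu$, or $g(w+\lambda v)\ge g(w+\mu v)$ for all $\lambda\le\mu$. Taking $v=0$ shows $M$ is the graph of a function $f:V_\theta\to[0,1]$, the associated function. *)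

From HB Require Import structures.
From mathcomp Require Import all_boot all_order all_algebra.
From mathcomp Require Import all_classical all_reals all_analysis.
Set Implicit Arguments. Unset Strict Implicit. Unset Printing Implicit Defensive.
Import Order.TTheory GRing.Theory Num.Theory.
Import numFieldNormedType.Exports.
Local Open Scope classical_set_scope.
Local Open Scope ring_scope.

Section IRHS.
Variable R : realType.

Fixpoint iter_dir (n : nat) (vs : seq 'rV[R]_n) (f : 'rV[R]_n -> R) : 'rV[R]_n -> R :=
  match vs with
  | [::] => f
  | v :: vs' => fun x => derive (iter_dir vs' f) x v
  end.

Definition smooth_fun (n : nat) (f : 'rV[R]_n -> R) : Prop :=
  forall vs : seq 'rV[R]_n,
    continuous (iter_dir vs f) /\ (forall x v, derivable (iter_dir vs f) x v).

(* Smooth embedded hypersurface (dimension n) of R^(n+1), via the standard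
   local-graph description: near each of its points, M is the graph of a
   smooth function of n of the coordinates. *)
Definition smooth_hypersurface (n : nat) (M : set 'rV[R]_n.+1) : Prop :=
  forall p, M p ->
    exists U : set 'rV[R]_n.+1, open U /\ U p /\
    exists (i : 'I_n.+1) (g : 'rV[R]_n -> R), smooth_fun g /\
      forall q, U q -> (M q <-> q 0 i = g (col' i q)).

(* identification of V_theta x R = R^2 x R with R^3 *)
Definition lift3 (x : 'rV[R]_2) (t : R) : 'rV[R]_3 :=
  \row_(i < 3) (if (i < 2)%N then x 0 (inord i) else t).

Definition monotonic_on_line (h : 'rV[R]_2 -> R) (w v : 'rV[R]_2) : Prop :=
  (forall l m : R, l <= m -> h (w + l *: v) <= h (w + m *: v)) \/
  (forall l m : R, l <= m -> h (w + m *: v) <= h (w + l *: v)).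

Definition IRHS (M : set ('rV[R]_2 * R)) : Prop :=
  (forall x t, M (x, t) -> 0 <= t <= 1) /\
  smooth_hypersurface [set lift3 p.1 p.2 | p in M] /\
  forall v w : 'rV[R]_2,
    exists h : 'rV[R]_2 -> R,
      (forall l : R, 0 <= h (w + l *: v) <= 1) /\
      monotonic_on_line h w v /\
      (forall x t, ((exists l : R, x = w + l *: v) /\ 0 <= t <= 1 /\ M (x, t)) <->
                   ((exists l : R, x = w + l *: v) /\ t = h x)).

Definition associated_function (M : set ('rV[R]_2 * R)) (f : 'rV[R]_2 -> R) : Prop :=
  forall x t, M (x, t) <-> t = f x.

End IRHS.

From HB Require Import structures.
From mathcomp Require Import all_boot all_order all_algebra.
From mathcomp Require Import all_classical all_reals all_analysis.
From mathcomp Require Import ring lra.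
Import Order.TTheory GRing.Theory Num.Theory.
Import numFieldNormedType.Exports.
Local Open Scope classical_set_scope.
Local Open Scope ring_scope.

(* Near each of its points, M is the graph of a continuous function over one
   of the three coordinate planes; an intermediate value argument shows that
   this forces the associated function f to be continuous.  On a line through w,
   f is monotone, so it cannot increase both somewhere along v and somewhere
   along -v, and it must do one of the two unless it is constant on w + R v.  By
   continuity both alternatives are open conditions on v, and half a turn around
   the circle of directions exchanges them; since R is connected, some direction
   must make f constant. *)

Section real_roots.
Context {R : realType}.
Implicit Types (phi : R -> R) (a b v eps : R).

Lemma IVT_mul_le0 {phi a b v} : a <= b -> continuous phi ->
  (phi a - v) * (phi b - v) <= 0 -> exists2 c, a <= c <= b & phi c = v.
Proof.
move=> ab phiC sgn; have [||c] := @IVT R phi a b v ab.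
- by move=> t; exact/continuous_subspaceT.
- rewrite ge_min le_max; apply/andP; split; apply/orP.
  + by case: (leP (phi a) v) => ?; [left|right; nra].
  + by case: (leP v (phi a)) => ?; [left|right; nra].
by rewrite in_itv /= => cab; exists c.
Qed.

(* If [phi a] and [phi b] had the same sign, a small level of that sign would
   be attained on both sides of [t0]. *)
Lemma unique_level_sign_change phi a (t0 : R) b eps :
  a < t0 < b -> 0 < eps -> continuous phi -> phi t0 = 0 ->
  (forall s t1 t2, `|s| < eps -> a <= t1 <= b -> a <= t2 <= b ->
     phi t1 = s -> phi t2 = s -> t1 = t2) ->
  phi a * phi b < 0.
Proof.
move=> /andP[at0 t0b] eps0.
have no_pos_pair (psi : R -> R) : continuous psi -> psi t0 = 0 ->
    (forall s t1 t2, `|s| < eps -> a <= t1 <= b -> a <= t2 <= b ->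
       psi t1 = s -> psi t2 = s -> t1 = t2) ->
    0 < psi a -> 0 < psi b -> False.
  move=> psiC psit0 uniq pa pb.
  pose m := Num.min (Num.min (psi a) (psi b)) eps.
  have m0 : 0 < m by rewrite !lt_min pa pb eps0.
  have [ma mb me] : [/\ m <= psi a, m <= psi b & m <= eps].
    by split; rewrite !ge_min lexx ?orbT.
  have [t1 /andP[t1a t1t0] e1] := IVT_mul_le0 (v := m / 2) (ltW at0) psiC
    (ltac:(rewrite psit0; nra)).
  have [t2 /andP[t0t2 t2b] e2] := IVT_mul_le0 (v := m / 2) (ltW t0b) psiC
    (ltac:(rewrite psit0; nra)).
  have t12 : t1 = t2.
    by apply: (uniq (m / 2)) e1 e2;
      [rewrite gtr0_norm; lra | apply/andP; split; lra..].
  by move: e1; rewrite (_ : t1 = t0) ?psit0; lra.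
move=> phiC phit0 uniq.
have nz t : t != t0 -> a <= t <= b -> phi t != 0.
  move=> tt0 tab; apply: contra_neq tt0 => phit.
  by apply: (uniq 0) phit phit0; rewrite ?normr0 ?(ltW at0) ?(ltW t0b).
have ab : a <= b by rewrite ltW // (lt_trans at0 t0b).
have pa : phi a != 0 by apply: nz; rewrite ?lt_eqF ?lexx.
have pb : phi b != 0 by apply: nz; rewrite ?gt_eqF ?lexx ?andbT.
rewrite ltNge; apply/negP => pab.
have [phia|phia|phia] := ltgtP 0 (phi a).
- by apply: (no_pos_pair phi) => //; nra.
- apply: (no_pos_pair (fun t => - phi t)); rewrite ?phit0 ?oppr0 ?oppr_gt0 //.
  + by move=> t; apply: cvgN; exact: phiC.
  + move=> s t1 t2 s_eps ? ? /(canRL opprK)-e1 /(canRL opprK)-e2.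
    by apply: (uniq (- s)); rewrite ?normrN.
  + nra.
- by move: pa; rewrite -phia eqxx.
Qed.

Lemma ball_itv {c d r t : R} : d < r -> c - d <= t <= c + d -> ball c r t.
Proof. by move=> dr /andP[? ?]; rewrite /ball /= ltr_norml; apply/andP; split; lra. Qed.

Lemma near_root_bounds {T : topologicalType} {G : T -> R -> R} {f : T -> R}
    {x : T} {a b : R} :
  a <= b -> (forall y, continuous (G y)) -> (forall t, {for x, continuous (G ^~ t)}) ->
  (\forall y \near x, forall t, a <= t <= b -> G y t = 0 -> t = f y) ->
  G x a * G x b < 0 -> \forall y \near x, a <= f y <= b.
Proof.
move=> ab GyC GtC roots sign.
have near_sign : \forall y \near x, G y a * G y b < 0.
  by apply: (cvgr_lt (G x a * G x b)) => //; apply: cvgM; [exact: GtC|exact: GtC].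
apply: filterS2 roots near_sign => y rootsy signy.
have Gy0 : (G y a - 0) * (G y b - 0) <= 0 by rewrite !subr0 ltW.
have [c cab Gc] := IVT_mul_le0 ab (GyC y) Gy0.
by rewrite -(rootsy c cab Gc).
Qed.

End real_roots.

Section matrix_balls.
Context {R : realType}.

Lemma continuous_col' m n (i : 'I_n.+1) :
  continuous (col' i : 'M[R]_(m, n.+1) -> 'M[R]_(m, n)).
Proof.
move=> A P /nbhs_ballP[e e0 eP]; apply/nbhs_ballP; exists e => // B [_ AB].
by apply: eP; split=> // a b; rewrite !mxE.
Qed.

Lemma ball_add_delta n (x : 'rV[R]_n) (j : 'I_n) (c r : R) :
  `|c| < r -> ball x r (x + c *: delta_mx 0 j).
Proof.
move=> cr; split=> [|a b]; first exact: le_lt_trans (normr_ge0 c) cr.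
rewrite /ball /= !mxE opprD addrA subrr sub0r normrN.
by case: (_ && _); rewrite ?mulr1 ?mulr0 ?normr0 //; exact: le_lt_trans (normr_ge0 c) cr.
Qed.

End matrix_balls.

Section lift3.
Context {R : realType}.
Implicit Types (x y : 'rV[R]_2) (t : R).

Lemma lift3_ord_max y t : lift3 y t 0 ord_max = t.
Proof. by rewrite mxE. Qed.

Lemma lift3_lift y t (j : 'I_2) : lift3 y t 0 (lift ord_max j) = y 0 j.
Proof.
have jE : lift ord_max j = j :> nat by rewrite /= /bump leqNgt ltn_ord.
by rewrite mxE jE ltn_ord; congr (y 0 _); apply: val_inj; rewrite /= inordK.
Qed.

Lemma col'_lift3_max y t : col' ord_max (lift3 y t) = y.
Proof. by apply/rowP => j; rewrite mxE lift3_lift. Qed.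

Lemma lift3_inj y y' t t' : lift3 y t = lift3 y' t' -> y = y' /\ t = t'.
Proof.
move=> E; split; last by rewrite -(lift3_ord_max y t) E lift3_ord_max.
by rewrite -(col'_lift3_max y t) E col'_lift3_max.
Qed.

Lemma lift3D_delta y t (c : R) (j : 'I_2) :
  lift3 (y + c *: delta_mx 0 j) t = lift3 y t + c *: delta_mx 0 (lift ord_max j).
Proof.
apply/rowP => k; rewrite [in RHS]mxE [X in _ = _ + X]mxE [delta_mx 0 _ 0 k]mxE.
case: (unliftP ord_max k) => [k'|] ->.
  by rewrite !lift3_lift !mxE (inj_eq (@lift_inj _ ord_max)).
by rewrite !lift3_ord_max (negbTE (neq_lift _ _)) andbF mulr0 addr0.
Qed.

Lemma ball_lift3 x y t0 t (e : R) :
  ball x e y -> ball t0 e t -> ball (lift3 x t0) e (lift3 y t).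
Proof.
move=> [e0 xy] t0t; split=> // a b; rewrite !mxE.
by case: ifP => // _; exact: xy.
Qed.

Lemma continuous_lift3l t : continuous (fun y : 'rV[R]_2 => lift3 y t).
Proof.
move=> x P /nbhs_ballP[e e0 eP]; apply/nbhs_ballP; exists e => // y xy.
by apply: eP; apply: ball_lift3 => //; exact: ballxx.
Qed.

Lemma continuous_lift3r y : continuous (lift3 y).
Proof.
move=> t P /nbhs_ballP[e e0 eP]; apply/nbhs_ballP; exists e => // s ts.
by apply: eP; apply: ball_lift3 => //; exact: ballxx.
Qed.

End lift3.

Section local_graph.
Context {R : realType}.
Context {f : 'rV[R]_2 -> R} {x : 'rV[R]_2}.
Context {U : set 'rV[R]_3} {i : 'I_3} {g : 'rV[R]_2 -> R}.
Hypotheses (gC : continuous g) (oU : open U) (Ux : U (lift3 x (f x))).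
Hypothesis graphU : forall y t, U (lift3 y t) ->
  (t = f y <-> lift3 y t 0 i = g (col' i (lift3 y t))).

(* Near [lift3 x (f x)], the graph of [f] is the zero set of [H]; [G y] is [H]
   along the vertical line over [y]. *)
Let H (q : 'rV[R]_3) := q 0 i - g (col' i q).
Let G y t := H (lift3 y t).

Let continuous_H : continuous H.
Proof.
move=> q; apply: (cvgB (F := nbhs q)); first exact: coord_continuous.
by apply: continuous_comp; [exact: continuous_col' | exact: gC].
Qed.

Let HD_delta q c : H (q + c *: delta_mx 0 i) = H q + c.
Proof.
rewrite /H; have -> : col' i (q + c *: delta_mx 0 i) = col' i q.
  by apply/rowP => k; rewrite !mxE eqxx eq_sym (negbTE (neq_lift i k)) mulr0 addr0.
by rewrite !mxE !eqxx mulr1 addrAC.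
Qed.

Let continuous_G_t y : continuous (G y).
Proof.
by move=> t; rewrite /G; exact: (continuous_comp (continuous_lift3r y t) (continuous_H _)).
Qed.

Let continuous_G_y t : continuous (G ^~ t).
Proof.
by move=> y; rewrite /G; exact: (continuous_comp (continuous_lift3l t y) (continuous_H _)).
Qed.

Let G_roots : exists2 r, 0 < r &
  forall y t, ball x r y -> ball (f x) r t -> (G y t = 0 <-> t = f y).
Proof.
have /nbhs_ballP[r r0 rU] : nbhs (lift3 x (f x)) U by exact: open_nbhs_nbhs.
exists r => // y t xy xt; rewrite graphU; last exact/rU/ball_lift3.
by rewrite /G /H; split=> [/subr0_eq|->]; rewrite ?subrr.
Qed.

(* Moving [y] along the [i]-th coordinate shifts [G y] by a constant, so every
   small level of [G x] is attained only once near [f x]; when [i] is the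
   vertical coordinate, [G x t] is simply [t - f x]. *)
Let G_sign_change r d : 0 < d < r ->
  (forall y t, ball x r y -> ball (f x) r t -> (G y t = 0 <-> t = f y)) ->
  G x (f x - d) * G x (f x + d) < 0.
Proof.
move=> /andP[d0 dr] roots.
have Gx0 : G x (f x) = 0 by apply/roots => //; exact: ballxx (lt_trans d0 dr).
case: (unliftP ord_max i) => [j|] iE.
- apply: (@unique_level_sign_change _ _ _ (f x) _ r); rewrite ?(lt_trans d0 dr) //.
  + by apply/andP; split; lra.
  move=> s t1 t2 sr t1d t2d e1 e2.
  pose y := x + (- s) *: delta_mx 0 j.
  have Gy t : G y t = G x t - s by rewrite /G lift3D_delta -iE HD_delta.
  have xy : ball x r y by apply: ball_add_delta; rewrite normrN.
  have root_t1 : t1 = f y.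
    by apply/(roots _ _ xy (ball_itv dr t1d)); rewrite Gy e1 subrr.
  have root_t2 : t2 = f y.
    by apply/(roots _ _ xy (ball_itv dr t2d)); rewrite Gy e2 subrr.
  by rewrite root_t1 root_t2.
- have Gx t : G x t = t - f x.
    by move: Gx0; rewrite /G /H iE !lift3_ord_max !col'_lift3_max => /subr0_eq ->.
  by rewrite !Gx; nra.
Qed.

Lemma local_graph_continuous : {for x, continuous f}.
Proof.
have [r r0 roots] := G_roots.
apply/(@cvgrPdist_lt _ _ _ (nbhs x)) => e e0.
pose m := Num.min r e.
have [m0 mr me] : [/\ 0 < m, m <= r & m <= e].
  by rewrite /m lt_min r0 e0 !ge_min !lexx ?orbT.
pose d := m / 2.
have [d0 dr de] : [/\ 0 < d, d < r & d < e] by rewrite /d; split; lra.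
have Gsign := @G_sign_change r d (ltac:(by rewrite d0 dr)) roots.
have near_roots : \forall y \near x,
    forall t, f x - d <= t <= f x + d -> G y t = 0 -> t = f y.
  apply/nbhs_ballP; exists r => // y xy t td /roots; apply => //.
  exact: ball_itv dr td.
have fx_d : f x - d <= f x + d by lra.
have bounds := near_root_bounds fx_d continuous_G_t
  (fun t => continuous_G_y t x) near_roots Gsign.
apply: (filterS (F := nbhs x)) bounds => y /andP[? ?].
by rewrite ltr_norml; apply/andP; split; lra.
Qed.

End local_graph.

Section item_response_hypersurface.
Context {R : realType}.
Variables (M : set ('rV[R]_2 * R)) (f : 'rV[R]_2 -> R).
Hypotheses (MI : IRHS M) (Mf : associated_function M f).

Let lift3_graph y t : [set lift3 p.1 p.2 | p in M] (lift3 y t) <-> t = f y.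
Proof.
split=> [[[y' t'] /= /Mf -> /lift3_inj[<- <-]] // | ->].
by exists (y, f y) => //; exact/Mf.
Qed.

Lemma IRHS_continuous : continuous f.
Proof.
move=> x; have [_ [SM _]] := MI.
have [U [oU [Ux [i [g [gs graphU]]]]]] := SM _ (proj2 (lift3_graph x (f x)) erefl).
apply: (local_graph_continuous (gs [::]).1 oU Ux) => y t Uyt.
by rewrite -lift3_graph; exact: graphU.
Qed.

Lemma IRHS_monotonic_on_line w v : monotonic_on_line f w v.
Proof.
have [_ [_ lines]] := MI; have [h [_ [hm hM]]] := lines v w.
have hf l : h (w + l *: v) = f (w + l *: v).
  by have [_ [_ /Mf]] := (hM _ _).2 (conj (ex_intro _ l erefl) erefl).
by case: hm => hm; [left|right] => l m lm; rewrite -!hf; exact: hm.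
Qed.

End item_response_hypersurface.

Section constant_direction.
Context {R : realType}.

(* [increases_along f w (- v)] says that f decreases somewhere along v. *)
Definition increases_along {V : normedModType R} (f : V -> R) (w v : V) :=
  exists t : R, 0 < t * (f (w + t *: v) - f w).

Lemma open_increases_along {T : topologicalType} {V : normedModType R}
    (f : V -> R) (w : V) (D : T -> V) :
  continuous f -> continuous D -> open [set s | increases_along f w (D s)].
Proof.
move=> fC DC; rewrite openE => s [t ts].
have lineC : {for s, continuous (fun s' => t * (f (w + t *: D s') - f w))}.
  apply: cvgM; first exact: cvg_cst.
  apply: cvgB; last exact: cvg_cst.
  apply: (continuous_comp (f := fun s' => w + t *: D s')) (fC _).
  by apply: cvgD; [exact: cvg_cst | apply: cvgZr; exact: DC].
by apply: filterS (cvgr_gt _ lineC 0 ts) => s' ?; exists t.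
Qed.

Lemma increases_along_or_opp {V : normedModType R} (f : V -> R) (w v : V) :
  ~ (forall l : R, f (w + l *: v) = f w) ->
  increases_along f w v \/ increases_along f w (- v).
Proof.
move=> nconst; apply: contrapT => ninc; apply: nconst => l.
have [neg|pos|] := ltgtP (l * (f (w + l *: v) - f w)) 0.
- exfalso; apply: ninc; right; exists (- l).
  by rewrite scalerN -scaleNr opprK mulNr oppr_gt0.
- by exfalso; apply: ninc; left; exists l.
- move/eqP; rewrite mulf_eq0 subr_eq0 => /orP[/eqP->|/eqP//].
  by rewrite scale0r addr0.
Qed.

Lemma monotonic_on_line_sign (f : 'rV[R]_2 -> R) (w v : 'rV[R]_2) :
  monotonic_on_line f w v ->
  (forall t, 0 <= t * (f (w + t *: v) - f w)) \/
  (forall t, t * (f (w + t *: v) - f w) <= 0).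
Proof.
have fw0 : f (w + 0 *: v) = f w by rewrite scale0r addr0.
case=> mono; [left|right] => t; have [t0|t0] := leP 0 t.
- by have := mono _ _ t0; rewrite fw0; nra.
- by have := mono _ _ (ltW t0); rewrite fw0; nra.
- by have := mono _ _ t0; rewrite fw0; nra.
- by have := mono _ _ (ltW t0); rewrite fw0; nra.
Qed.

Lemma increases_along_opp (f : 'rV[R]_2 -> R) (w v : 'rV[R]_2) :
  monotonic_on_line f w v ->
  ~ (increases_along f w v /\ increases_along f w (- v)).
Proof.
move=> /monotonic_on_line_sign mono [[t1 inc1] [t2]].
rewrite scalerN -scaleNr => inc2.
case: mono => [/(_ (- t2))|/(_ t1)]; nra.
Qed.

Lemma connected_setT_clopen {T : topologicalType} (A : set T) :
  connected [set: T] -> open A -> open (~` A) -> A = set0 \/ A = setT.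
Proof.
move=> TC oA oAC; have [->|/set0P A0] := eqVneq A set0; [by left | right].
apply: (TC A A0); exists A; rewrite ?setTI //.
by rewrite -[A]setCK; exact: open_closedC.
Qed.

Lemma monotonic_on_lines_constant_direction (f : 'rV[R]_2 -> R) (w : 'rV[R]_2) :
  continuous f -> (forall v, monotonic_on_line f w v) ->
  exists v : 'rV[R]_2, v != 0 /\ (forall l : R, f (w + l *: v) = f w).
Proof.
move=> fC mono; apply: contrapT => nconst.
pose e (s : R) : 'rV[R]_2 := cos s *: delta_mx 0 0 + sin s *: delta_mx 0 ord_max.
have e_neq0 s : e s != 0.
  apply/eqP => /rowP es; have := cos2Dsin2 s.
  have -> : cos s = 0 by have := es 0; rewrite !mxE /= mulr1 mulr0 addr0.
  have -> : sin s = 0 by have := es ord_max; rewrite !mxE /= mulr1 mulr0 add0r.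
  by rewrite expr0n /= addr0 => /eqP; rewrite eq_sym oner_eq0.
have e_pi : e pi = - e 0.
  by rewrite /e cospi sinpi cos0 sin0 !scale0r !addr0 scaleN1r scale1r.
have eC : continuous e.
  move=> s; apply: (cvgD (F := nbhs s)).
    exact: cvgZr_tmp (@continuous_cos R s).
  exact: cvgZr_tmp (@continuous_sin R s).
pose A := [set s | increases_along f w (e s)].
have AC : ~` A = [set s | increases_along f w (- e s)].
  apply/seteqP; split => s /=.
  - move=> nAs; case: (increases_along_or_opp f w (e s)) => //.
    by move=> c; apply: nconst; exists (e s).
  - by move=> As' As; exact: increases_along_opp (mono (e s)) (conj As As').
have oA : open A by exact: (open_increases_along f w e fC eC).
have RC : connected [set: R] by apply/connected_intervalP.
have oAC : open (~` A).
  rewrite AC; apply: (open_increases_along _ _ _ fC) => s.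
  by apply: (cvgN (F := nbhs s)); exact: eC.
have [A0|AT] := connected_setT_clopen A RC oA oAC.
- have : (~` A) pi by rewrite A0.
  have : (~` A) 0 by rewrite A0.
  rewrite AC /= e_pi opprK => inc_neg inc.
  exact: increases_along_opp (mono (e 0)) (conj inc inc_neg).
- have : A pi by rewrite AT.
  have : A 0 by rewrite AT.
  rewrite /A /= e_pi => inc inc_neg.
  exact: increases_along_opp (mono (e 0)) (conj inc inc_neg).
Qed.

End constant_direction.

Theorem lemma2 (R : realType) (M : set ('rV[R]_2 * R)) (f : 'rV[R]_2 -> R) :
  IRHS M -> associated_function M f ->
  forall w : 'rV[R]_2, exists v : 'rV[R]_2,
    v != 0 /\ (forall l : R, f (w + l *: v) = f w).
Proof.
move=> MI Mf w; apply: monotonic_on_lines_constant_direction.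
  exact: IRHS_continuous MI Mf.
exact: IRHS_monotonic_on_line MI Mf w.
Qed.
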